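(* Let $n\ge2$, let $\mathbf{x}=(x_1,\dots,x_n)^T\in\mathbb{C}^n$ with $x_i\neq x_j$ for all $i\neq j$, let $F$, $p$ and $F''$ be as in the context, and put \[ W_l=\frac{p(x_l)}{\prod_{j=1,\,j\neq l}^n(x_l-x_j)},\qquad l=1,\dots,n,\qquad \mathbf{d}=F'(\mathbf{x})^{-1}F(\mathbf{x}). \] Then $\mathbf{d}=(W_1,\dots,W_n)^T$ and, for $j=1,\dots,n$, \[ \Big(F'(\mathbf{x})^{-1}\,F''(\mathbf{x})(\mathbf{d},\mathbf{d})\Big)_j=2\,W_j\sum_{\nu=1,\,\nu\neq j}^n\frac{W_\nu}{x_\nu-x_j}. \]
   Context: Let $p(t)=t^n+a_{n-1}t^{n-1}+\dots+a_1t+a_0$ be a monic polynomial of degree $n$ with real coefficients, and set $\mathbf{a}=(a_0,a_1,\dots,a_{n-1})^T$. Define $V=(v_1,\dots,v_n)^T:\mathbb{C}^n\to\mathbb{C}^n$ by \[ v_{n-\nu+1}(\mathbf{x})=\sum_{i_1<i_2<\dots<i_\nu}(-x_{i_1})(-x_{i_2})\cdots(-x_{i_\nu}),\qquad \nu=1,\dots,n, \] (the sum running over all $\nu$-element index sets $\{i_1<\dots<i_\nu\}\subseteq\{1,\dots,n\}$), so that $\prod_{j=1}^n(t-x_j)=t^n+\sum_{j=0}^{n-1}v_{j+1}(\mathbf{x})t^j$. Define $F=(f_1,\dots,f_n)^T:\mathbb{C}^n\to\mathbb{C}^n$ by $F(\mathbf{x})=V(\mathbf{x})-\mathbf{a}$,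 with Jacobian $F'(\mathbf{x})$. For $k=1,\dots,n$, $A^{(k)}(\mathbf{x})\in\mathbb{C}^{n\times n}$ is the matrix whose $(i,l)$ entry is $\partial^2 f_i(\mathbf{x})/\partial x_l\partial x_k$, and the second derivative is the bilinear map $F''(\mathbf{x})(\mathbf{y},\mathbf{z})=\sum_{k=1}^n z_k\,A^{(k)}(\mathbf{x})\,\mathbf{y}$ for $\mathbf{y},\mathbf{z}\in\mathbb{C}^n$, i.e. $F''(\mathbf{x})(\mathbf{y},\mathbf{z})_i=\sum_{k,l}\frac{\partial^2 f_i(\mathbf{x})}{\partial x_l\partial x_k}y_l z_k$. *)

From HB Require Import structures.
From mathcomp Require Import all_boot all_order all_algebra.
From mathcomp Require Import mpoly.
From mathcomp Require Import complex.
Set Implicit Arguments. Unset Strict Implicit. Unset Printing Implicit Defensive.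
Import Order.TTheory GRing.Theory Num.Theory.
Local Open Scope ring_scope.

Section Defs.
Variables (R : rcfType) (n : nat).
Local Notation C := (complex R).

Definition realC (r : R) : C := Complex r 0.

(* p(t) = t^n + sum_{j<n} a_j t^j, evaluated at a complex point;
   a j is the coefficient a_j (0-based index j = 0..n-1). *)
Definition p_eval (a : 'I_n -> R) (t : C) : C :=
  t ^+ n + \sum_(j < n) realC (a j) * t ^+ j.

(* Component i (0-based, i.e. v_{i+1}) of V as a polynomial in x_1..x_n:
   v_{n-nu+1} = sum over nu-subsets of prod (-x_k), with nu = n - i. *)
Definition Vpoly (i : 'I_n) : {mpoly C[n]} :=
  \sum_(A : {set 'I_n} | #|A| == (n - i)%N) \prod_(k in A) (- 'X_k).

Definition Fpoly (a : 'I_n -> R) (i : 'I_n) : {mpoly C[n]} :=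
  Vpoly i - (realC (a i))%:MP.

Definition Fval (a : 'I_n -> R) (x : 'cV[C]_n) : 'cV[C]_n :=
  \col_i (Fpoly a i).@[fun k => x k 0].

Definition Fjac (a : 'I_n -> R) (x : 'cV[C]_n) : 'M[C]_n :=
  \matrix_(i, l) (mderiv l (Fpoly a i)).@[fun k => x k 0].

Definition Amat (a : 'I_n -> R) (x : 'cV[C]_n) (k : 'I_n) : 'M[C]_n :=
  \matrix_(i, l) (mderiv l (mderiv k (Fpoly a i))).@[fun k' => x k' 0].

Definition F2 (a : 'I_n -> R) (x y z : 'cV[C]_n) : 'cV[C]_n :=
  \sum_(k < n) z k 0 *: (Amat a x k *m y).

Definition Wcoef (a : 'I_n -> R) (x : 'cV[C]_n) (l : 'I_n) : C :=
  p_eval a (x l 0) / \prod_(j < n | j != l) (x l 0 - x j 0).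

End Defs.

From HB Require Import structures.
From mathcomp Require Import all_boot all_order all_algebra.
From mathcomp Require Import mpoly.
From mathcomp Require Import complex.
From mathcomp Require Import ring.
Import Order.TTheory GRing.Theory Num.Theory.
Local Open Scope ring_scope.
Set Implicit Arguments. Unset Strict Implicit. Unset Printing Implicit Defensive.

(* The proof works entirely with univariate polynomials in t.  By Vieta,
   the components of V(x) are the low coefficients of the nodal polynomial
   q(t) = prod_j (t - x_j).  Differentiating q coefficientwise in the
   symbolic variables x_1..x_n gives d q / d x_l = - prod_(j <> l)(t - x_j)
   and d^2 q / d x_k d x_l = prod_(j <> k, l)(t - x_j) for k <> l (zero for
   k = l).  Hence F'(x) y is the coefficient vector of the polynomial
   L_y = - sum_l y_l prod_(j <> l)(t - x_j), of degree < n, whose value at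
   the node x_m is - y_m * prod_(j <> m)(x_m - x_j).
   A polynomial of degree < n is determined by its values at the n distinct
   nodes, and so is its coefficient vector.  This gives, by comparing values
   at the nodes:
   - F'(x) is invertible (L_y = 0 forces y = 0);
   - F'(x) W = F(x), the coefficient vector of q - p (both sides equal
     - p(x_m) at x_m), so d = W;
   - F''(x)(W,W) = F'(x) Y with Y_j = 2 W_j sum_(nu <> j) W_nu/(x_nu - x_j). *)

Section NodalPolynomials.
Variables (K : idomainType) (n : nat) (z : 'I_n -> K).

Lemma size_sum_le (I : finType) (P : pred I) (F : I -> {poly K}) k :
  (forall i, P i -> (size (F i) <= k)%N) -> (size (\sum_(i | P i) F i)%R <= k)%N.
Proof. by move=> hF; apply: leq_trans (size_sum _ _ _) _; apply/bigmax_leqP. Qed.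

Lemma size_prod_XsubC_omit (P : pred 'I_n) (l : 'I_n) :
  ~~ P l -> (size (\prod_(j | P j) ('X - (z j)%:P))%R <= n)%N.
Proof.
move=> nPl; rewrite -big_filter size_prod_XsubC size_filter.
have -> : count P (index_enum 'I_n) = #|P| by rewrite cardE /enum_mem size_filter.
rewrite -[X in (_ <= X)%N](card_ord n) -(cardC P) -[X in (X < _)%N]addn0.
by rewrite ltn_add2l; apply/card_gt0P; exists l; rewrite inE.
Qed.

Lemma horner_prod_XsubC_node (P : pred 'I_n) (m : 'I_n) :
  (\prod_(j | P j) ('X - (z j)%:P)).[z m] =
  if P m then 0 else \prod_(j | P j) (z m - z j).
Proof.
rewrite horner_prod; under eq_bigr do rewrite hornerXsubC.
by case: ifP => // Pm; rewrite (bigD1 m) //= subrr mul0r.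
Qed.

Lemma poly_eq_at_nodes (A B : {poly K}) :
  injective z -> (size A <= n)%N -> (size B <= n)%N ->
  (forall m, A.[z m] = B.[z m]) -> A = B.
Proof.
move=> inj_z sA sB eqAB; apply/eqP; rewrite -subr_eq0; apply/eqP.
apply: (@roots_geq_poly_eq0 _ _ [seq z m | m <- enum 'I_n]).
- by apply/allP => t /mapP [m _ ->]; rewrite /root hornerD hornerN eqAB subrr.
- by rewrite map_inj_uniq // enum_uniq.
- rewrite size_map size_enum_ord; apply: leq_trans (size_polyD _ _) _.
  by rewrite geq_max size_polyN sA sB.
Qed.

End NodalPolynomials.

Section CoefficientwiseDerivative.
Variables (K : comNzRingType) (n : nat).
Local Notation XsubX j := ('X - ('X_j : {mpoly K[n]})%:P).

Definition cderiv (l : 'I_n) (P : {poly {mpoly K[n]}}) : {poly {mpoly K[n]}} :=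
  map_poly (mderiv l) P.

Lemma coef_cderiv l P i : (cderiv l P)`_i = mderiv l P`_i.
Proof. by rewrite /cderiv coef_map_id0 // mderiv0. Qed.

Lemma cderivM l P Q : cderiv l (P * Q) = cderiv l P * Q + P * cderiv l Q.
Proof.
apply/polyP => i; rewrite coefD coef_cderiv !coefM raddf_sum -big_split /=.
by apply: eq_bigr => j _; rewrite mderivM !coef_cderiv.
Qed.

Lemma mderiv_var (l j : 'I_n) : mderiv l ('X_j : {mpoly K[n]}) = (j == l)%:R.
Proof.
rewrite mderivX mnm1E; case: (j =P l) => [->|_]; last by rewrite scale0r.
have -> : (U_(l) - U_(l))%MM = 0%MM.
  by apply/mnmP => k; rewrite mnmBE mnm0E subnn.
by rewrite mpolyX0 scale1r.
Qed.

Lemma cderiv_XsubX l j : cderiv l (XsubX j) = - ((j == l)%:R)%:P.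
Proof.
have cderivX : cderiv l 'X = 0.
  apply/polyP => i; rewrite coef_cderiv coefX coef0.
  by case: (i == 1)%N; rewrite ?mulr1n -?mpolyC1 ?mderivC ?mderiv0.
rewrite /cderiv raddfB /= -/(cderiv l 'X) cderivX map_polyC sub0r.
by congr (- _%:P); apply: mderiv_var.
Qed.

Lemma cderiv_prod_free l (P : pred 'I_n) :
  ~~ P l -> cderiv l (\prod_(j | P j) XsubX j) = 0.
Proof.
move=> nPl; apply: (big_ind (fun Q => cderiv l Q = 0)).
- by rewrite -polyC1 /cderiv map_polyC /= -mpolyC1 mderivC.
- by move=> Q1 Q2 h1 h2; rewrite cderivM h1 h2 mul0r mulr0 addr0.
- move=> j Pj; rewrite cderiv_XsubX; case: (j =P l) => [ejl|]; last by rewrite oppr0.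
  by move: Pj; rewrite ejl (negbTE nPl).
Qed.

Lemma cderiv_prod l (P : pred 'I_n) :
  P l -> cderiv l (\prod_(j | P j) XsubX j) = - \prod_(j | P j && (j != l)) XsubX j.
Proof.
move=> Pl; rewrite (bigD1 l) //= cderivM cderiv_prod_free; last by rewrite eqxx andbF.
by rewrite cderiv_XsubX eqxx mulr0 addr0 mulNr mul1r.
Qed.

Lemma meval_coef_prod (v : 'I_n -> K) (P : pred 'I_n) i :
  ((\prod_(j | P j) XsubX j)`_i).@[v] = (\prod_(j | P j) ('X - (v j)%:P))`_i.
Proof.
rewrite -coef_map_id0 ?meval0 // rmorph_prod.
by under eq_bigr do rewrite rmorphB /= map_polyX map_polyC /= mevalXU.
Qed.

End CoefficientwiseDerivative.

Section Vieta.
Variables (R : rcfType) (n : nat).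
Local Notation C := (complex R).
Local Notation XsubX j := ('X - ('X_j : {mpoly C[n]})%:P).

Lemma Vpoly_coef (i : 'I_n) : Vpoly R i = (\prod_(j < n) XsubX j)`_i.
Proof.
pose xs := [tuple ('X_j : {mpoly C[n]}) | j < n].
have ki : (n - i < n.+1)%N by rewrite ltnS leq_subr.
have := mroots_coeff xs (Ordinal ki).
rewrite /= subKn; last exact: ltnW.
have -> : \prod_(c <- xs) ('X - c%:P) = \prod_(j < n) XsubX j.
  by rewrite /xs /= big_map big_enum.
move=> ->; rewrite /mesym raddf_sum /= mulr_sumr /Vpoly.
apply: eq_bigr => A /eqP cardA; rewrite rmorph_prod /= prodrN cardA.
by congr (_ * _); apply: eq_bigr => j _; rewrite mevalXU tnth_mktuple.
Qed.

Lemma mderiv_Vpoly (l i : 'I_n) :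
  mderiv l (Vpoly R i) = - (\prod_(j | j != l) XsubX j)`_i.
Proof. by rewrite Vpoly_coef -coef_cderiv cderiv_prod // coefN. Qed.

Lemma mderiv2_Vpoly (k l i : 'I_n) :
  mderiv l (mderiv k (Vpoly R i)) =
  if l == k then 0 else (\prod_(j | (j != k) && (j != l)) XsubX j)`_i.
Proof.
rewrite mderiv_Vpoly mderivN -coef_cderiv.
case: (l =P k) => [->|/eqP nlk]; last by rewrite cderiv_prod // coefN opprK.
by rewrite cderiv_prod_free ?eqxx // coef0 oppr0.
Qed.

End Vieta.

Section NewtonCorrection.
Variables (R : rcfType) (n : nat) (a : 'I_n -> R) (x : 'cV[complex R]_n).
Hypothesis x_inj : forall i j : 'I_n, i != j -> x i 0 != x j 0.
Local Notation C := (complex R).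
Local Notation W := (\col_l Wcoef a x l).

Definition nodal : {poly C} := \prod_(j < n) ('X - (x j 0)%:P).
Definition omit1 (l : 'I_n) : {poly C} := \prod_(j | j != l) ('X - (x j 0)%:P).
Definition omit2 (k l : 'I_n) : {poly C} :=
  \prod_(j | (j != k) && (j != l)) ('X - (x j 0)%:P).
Definition ppoly : {poly C} := 'X^n + \sum_(j < n) (realC (a j))%:P * 'X^j.

(* q'(x_m) = prod_(j <> m) (x_m - x_j), the denominator of W_m. *)
Definition node_weight (m : 'I_n) : C := \prod_(j | j != m) (x m 0 - x j 0).

(* The polynomial whose coefficient vector is F'(x) y. *)
Definition jac_poly (y : 'cV[C]_n) : {poly C} := - \sum_l y l 0 *: omit1 l.

Lemma node_inj : injective (fun k => x k 0).
Proof. by move=> i j; apply: contra_eq => /x_inj. Qed.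

Lemma node_weight_neq0 m : node_weight m != 0.
Proof. by apply/prodf_neq0 => j jm; rewrite subr_eq0 x_inj // eq_sym. Qed.

Lemma ppoly_coef (i : 'I_n) : ppoly`_i = realC (a i).
Proof.
rewrite /ppoly coefD coefXn ltn_eqF // add0r coef_sum (bigD1 i) //=.
rewrite coefCM coefXn eqxx mulr1 big1 ?addr0 // => k ki.
rewrite coefCM coefXn; case: eqP => [/val_inj ik|]; last by rewrite mulr0.
by rewrite ik eqxx in ki.
Qed.

Lemma Fjac_entry i l : Fjac a x i l = - (omit1 l)`_i.
Proof.
by rewrite mxE /Fpoly mderivB mderivC subr0 mderiv_Vpoly mevalN meval_coef_prod.
Qed.

Lemma Amat_entry k i l : Amat a x k i l = if l == k then 0 else (omit2 k l)`_i.
Proof.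
rewrite mxE /Fpoly mderivB mderivC subr0 mderiv2_Vpoly.
by case: (l == k); rewrite ?meval0 ?meval_coef_prod.
Qed.

Lemma Fval_entry i : Fval a x i 0 = (nodal - ppoly)`_i.
Proof.
rewrite mxE /Fpoly mevalB mevalC Vpoly_coef coefB ppoly_coef.
by rewrite (meval_coef_prod _ xpredT).
Qed.

Lemma Fjac_mul_coef (y : 'cV[C]_n) i : (Fjac a x *m y) i 0 = (jac_poly y)`_i.
Proof.
rewrite mxE coefN coef_sum -sumrN; apply: eq_bigr => l _.
by rewrite Fjac_entry coefZ mulNr mulrC.
Qed.

Lemma size_jac_poly (y : 'cV[C]_n) : (size (jac_poly y) <= n)%N.
Proof.
rewrite size_polyN; apply: size_sum_le => l _.
apply: leq_trans (size_scale_leq _ _) _.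
by apply: (size_prod_XsubC_omit _ (l := l)); rewrite /= eqxx.
Qed.

(* Only the term l = m of jac_poly y survives at the node x_m. *)
Lemma jac_poly_node (y : 'cV[C]_n) m :
  (jac_poly y).[x m 0] = - (y m 0 * node_weight m).
Proof.
rewrite hornerN horner_sum (bigD1 m) //= big1 ?addr0 => [|l lm].
  by rewrite hornerZ (horner_prod_XsubC_node (fun k => x k 0)) eqxx.
by rewrite hornerZ (horner_prod_XsubC_node (fun k => x k 0)) eq_sym lm mulr0.
Qed.

Lemma ppoly_node t : ppoly.[t] = p_eval a t.
Proof.
rewrite /ppoly /p_eval hornerD hornerXn horner_sum; congr (_ + _).
by apply: eq_bigr => j _; rewrite hornerCM hornerXn.
Qed.

(* q and p are both monic of degree n, so q - p has degree < n. *)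
Lemma size_nodal_sub_ppoly : (size (nodal - ppoly)%R <= n)%N.
Proof.
have size_nodal : size nodal = n.+1.
  by rewrite /nodal size_prod_XsubC [index_enum _]unlock -enumT size_enum_ord.
apply/leq_sizeP => j nj; rewrite coefB.
have -> : ppoly`_j = (j == n)%:R.
  rewrite /ppoly coefD coefXn coef_sum big1 ?addr0 // => k _.
  rewrite coefCM coefXn; case: eqP => [jk|]; last by rewrite mulr0.
  by move: (ltn_ord k); rewrite -jk ltnNge nj.
case: eqP => [->|/eqP jn].
  have /monicP : nodal \is monic by apply: monic_prod_XsubC.
  by rewrite lead_coefE size_nodal => ->; rewrite subrr.
by rewrite nth_default ?subrr // size_nodal ltn_neqAle eq_sym jn.
Qed.

(* F'(x) W = F(x): both are coefficient vectors of polynomials of degree < n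
   taking the value - p(x_m) at every node x_m. *)
Lemma Fjac_mul_W : Fjac a x *m W = Fval a x.
Proof.
have jac_W : jac_poly W = nodal - ppoly.
  apply: (poly_eq_at_nodes node_inj (size_jac_poly _) size_nodal_sub_ppoly) => m.
  rewrite jac_poly_node hornerD hornerN ppoly_node mxE /Wcoef divfK ?node_weight_neq0 //.
  by rewrite (horner_prod_XsubC_node (fun k => x k 0) xpredT) sub0r.
by apply/matrixP => i j; rewrite (ord1 j) Fjac_mul_coef jac_W Fval_entry.
Qed.

(* F'(x) is invertible: F'(x) y = 0 makes jac_poly y vanish, and its value
   at x_m is - y_m q'(x_m). *)
Lemma Fjac_unit : Fjac a x \in unitmx.
Proof.
rewrite -unitmx_tr -row_free_unit; apply: inj_row_free => v vJ0.
have Jv0 : Fjac a x *m v^T = 0 by rewrite -[Fjac a x]trmxK -trmx_mul vJ0 trmx0.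
have jac_v : jac_poly v^T = 0.
  apply/polyP => i; rewrite coef0; case: (ltnP i n) => [lt_in|le_ni].
    by rewrite -(Fjac_mul_coef _ (Ordinal lt_in)) Jv0 mxE.
  exact: nth_default (leq_trans (size_jac_poly _) le_ni).
apply/rowP => m; have /eqP := congr1 (horner^~ (x m 0)) jac_v.
rewrite jac_poly_node horner0 oppr_eq0 mulf_eq0 (negbTE (node_weight_neq0 m)) orbF.
by rewrite !mxE => /eqP.
Qed.

Definition node_weight2 (m l : 'I_n) : C :=
  \prod_(j | (j != m) && (j != l)) (x m 0 - x j 0).

Lemma node_weight_split m l : l != m -> node_weight m = (x m 0 - x l 0) * node_weight2 m l.
Proof. by move=> lm; rewrite /node_weight (bigD1 l). Qed.

Lemma omit2_node k l m : (omit2 k l).[x m 0] =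
  if m == k then node_weight2 m l else if m == l then node_weight2 m k else 0.
Proof.
rewrite (horner_prod_XsubC_node (fun k => x k 0)) /=.
case: (m =P k) => [->|_] //=.
case: (m =P l) => [->|_] //=.
by apply: eq_bigl => j; rewrite andbC.
Qed.

(* The polynomial whose coefficient vector is F''(x)(W, W). *)
Definition hess_poly : {poly C} :=
  \sum_k \sum_(l | l != k) (Wcoef a x k * Wcoef a x l) *: omit2 k l.

Definition Ycol : 'cV[C]_n :=
  \col_j (2 * Wcoef a x j * \sum_(nu | nu != j) Wcoef a x nu / (x nu 0 - x j 0)).

Lemma F2_W_coef i : F2 a x W W i 0 = hess_poly`_i.
Proof.
rewrite /F2 summxE /hess_poly coef_sum; apply: eq_bigr => k _.
rewrite !mxE coef_sum mulr_sumr (bigD1 k) //= Amat_entry eqxx mul0r mulr0 add0r.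
by apply: eq_bigr => l /negbTE lk; rewrite Amat_entry lk coefZ !mxE; ring.
Qed.

Lemma size_hess_poly : (size hess_poly <= n)%N.
Proof.
apply: size_sum_le => k _; apply: size_sum_le => l _.
apply: leq_trans (size_scale_leq _ _) _.
by apply: (size_prod_XsubC_omit _ (l := k)); rewrite /= eqxx.
Qed.

(* At x_m only the terms with k = m or l = m survive, and they pair up. *)
Lemma hess_poly_node m : hess_poly.[x m 0] =
  2 * Wcoef a x m * \sum_(l | l != m) Wcoef a x l * node_weight2 m l.
Proof.
rewrite /hess_poly horner_sum (bigD1 m) //=.
have diag : (\sum_(l | l != m) (Wcoef a x m * Wcoef a x l) *: omit2 m l).[x m 0] =
    \sum_(l | l != m) Wcoef a x m * Wcoef a x l * node_weight2 m l.
  by rewrite horner_sum; apply: eq_bigr => l _; rewrite hornerZ omit2_node eqxx.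
have off_diag k : k != m ->
    (\sum_(l | l != k) (Wcoef a x k * Wcoef a x l) *: omit2 k l).[x m 0] =
    Wcoef a x k * Wcoef a x m * node_weight2 m k.
  move=> km; rewrite horner_sum (bigD1 m) 1?eq_sym //= big1 ?addr0.
    by rewrite hornerZ omit2_node eq_sym (negbTE km) eqxx.
  move=> l /andP [lk lm]; rewrite hornerZ omit2_node.
  by rewrite eq_sym (negbTE km) eq_sym (negbTE lm) mulr0.
rewrite diag (eq_bigr _ off_diag) -big_split mulr_sumr.
by apply: eq_bigr => l _ /=; ring.
Qed.

(* F''(x)(W, W) = F'(x) Y: compare the two polynomials at the nodes, using
   q'(x_m) = (x_m - x_l) * node_weight2 m l. *)
Lemma F2_W : F2 a x W W = Fjac a x *m Ycol.
Proof.
have hess_jac : hess_poly = jac_poly Ycol.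
  apply: (poly_eq_at_nodes node_inj size_hess_poly (size_jac_poly _)) => m.
  have weight_sum : \sum_(l | l != m) Wcoef a x l * node_weight2 m l =
      - ((\sum_(l | l != m) Wcoef a x l / (x l 0 - x m 0)) * node_weight m).
    rewrite mulr_suml -sumrN; apply: eq_bigr => l lm.
    have lm0 : x l 0 - x m 0 != 0 by rewrite subr_eq0 x_inj.
    by rewrite (node_weight_split lm); field.
  by rewrite hess_poly_node jac_poly_node mxE weight_sum; ring.
by apply/matrixP => i j; rewrite (ord1 j) F2_W_coef Fjac_mul_coef hess_jac.
Qed.

End NewtonCorrection.

Theorem mainTheorem6 (R : rcfType) (n : nat) (a : 'I_n -> R) (x : 'cV[complex R]_n) :
  (2 <= n)%N ->
  (forall i j : 'I_n, i != j -> x i 0 != x j 0) ->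
  let d := invmx (Fjac a x) *m Fval a x in
  [/\ Fjac a x \in unitmx,
      d = \col_l Wcoef a x l
    & forall j : 'I_n,
        (invmx (Fjac a x) *m F2 a x d d) j 0
        = 2 * Wcoef a x j *
          \sum_(nu < n | nu != j) Wcoef a x nu / (x nu 0 - x j 0)].
Proof.
move=> _ x_inj d.
have J_unit := Fjac_unit a x_inj.
have d_W : d = \col_l Wcoef a x l by rewrite /d -(Fjac_mul_W a x_inj) mulKmx.
split => // j.
by rewrite d_W (F2_W a x_inj) mulKmx // mxE.
Qed.
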